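(* A set $\Gamma\subset\mathbb{C}$ is of the form $f(\mathbb{R})$ for some nonconstant delta-monotone map $f\colon\mathbb{C}\to\mathbb{C}$ if and only if $\Gamma$ is a Lipschitz graph, i.e. $\Gamma=\{x+ig(x)\colon x\in\mathbb{R}\}$ for some Lipschitz function $g\colon\mathbb{R}\to\mathbb{R}$ (equivalently, the projection $w\mapsto\operatorname{Re}w$ is a bi-Lipschitz map of $\Gamma$ onto $\mathbb{R}$).
   Context: A map $f\colon\mathbb{C}\to\mathbb{C}$ is delta-monotone if there exists $\delta>0$ such that $\operatorname{Re}\frac{f(z)-f(\zeta)}{z-\zeta}\ge\delta\frac{|f(z)-f(\zeta)|}{|z-\zeta|}$ for all distinct $z,\zeta\in\mathbb{C}$. *)

From Stdlib Require Import Reals.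
Open Scope R_scope.

Definition Cplx : Type := (R * R)%type.

Definition Re (z : Cplx) : R := fst z.
Definition Im (z : Cplx) : R := snd z.
Definition RtoC (x : R) : Cplx := (x, 0).
Definition Csub (z w : Cplx) : Cplx := (fst z - fst w, snd z - snd w).
Definition Cmul (z w : Cplx) : Cplx :=
  (fst z * fst w - snd z * snd w, fst z * snd w + snd z * fst w).
Definition Cinv (z : Cplx) : Cplx :=
  (fst z / (fst z ^ 2 + snd z ^ 2), - snd z / (fst z ^ 2 + snd z ^ 2)).
Definition Cdiv (z w : Cplx) : Cplx := Cmul z (Cinv w).
Definition Cmod (z : Cplx) : R := sqrt (fst z ^ 2 + snd z ^ 2).

Definition delta_monotone (f : Cplx -> Cplx) : Prop :=
  exists delta : R, 0 < delta /\
    forall z zeta : Cplx, z <> zeta ->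
      Re (Cdiv (Csub (f z) (f zeta)) (Csub z zeta))
        >= delta * (Cmod (Csub (f z) (f zeta)) / Cmod (Csub z zeta)).

Definition nonconstant (f : Cplx -> Cplx) : Prop := exists z w : Cplx, f z <> f w.

Definition lipschitz (g : R -> R) : Prop :=
  exists L : R, forall x y : R, Rabs (g x - g y) <= L * Rabs (x - y).

(* Delta-monotonicity is first rewritten as an angle condition
   <f z - f w, z - w> >= d |f z - f w| |z - w| (cone_condition).

   (=>) Along the real axis, u(x) = Re f(x) satisfies
   u(y) - u(x) >= d |f(y) - f(x)| for x < y, so f(x) is determined by u(x)
   and Im f is (1/d)-Lipschitz as a function of u. It remains to show that u
   is onto R. The key geometric estimate is a comparison of opposite
   directions, |f(x + rM) - f(x)| >= k |f(x - r) - f(x)|, obtained by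
   chaining the angle condition along a spiral from x - r to x + rM in the
   plane. From it, u is unbounded above (and below, by the point reflection
   z |-> -f(-z)) and has no jumps; the intermediate value theorem concludes.

   (<=) For an L-Lipschitz g, the shear (x, y) |-> (x, g x + (L^2+1) y)
   satisfies the angle condition and maps R onto the graph of g. *)

From Stdlib Require Import Reals Lra Psatz Classical ClassicalEpsilon.
Open Scope R_scope.

Definition dot (a b : Cplx) : R := fst a * fst b + snd a * snd b.
Definition Cadd (a b : Cplx) : Cplx := (fst a + fst b, snd a + snd b).
Definition polar (r t : R) : Cplx := (r * cos t, r * sin t).

Lemma Cmod_ge0 (a : Cplx) : 0 <= Cmod a.
Proof. unfold Cmod; apply sqrt_pos. Qed.

Lemma Cmod_sq (a : Cplx) : Cmod a * Cmod a = fst a ^ 2 + snd a ^ 2.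
Proof. unfold Cmod; apply sqrt_sqrt; nra. Qed.

Lemma Cmod_le_sq (a : Cplx) (c : R) :
  0 <= c -> fst a ^ 2 + snd a ^ 2 <= c * c -> Cmod a <= c.
Proof.
  intros Hc H. pose proof (Cmod_sq a). pose proof (Cmod_ge0 a). nra.
Qed.

Lemma dot_le_Cmod (a b : Cplx) : dot a b <= Cmod a * Cmod b.
Proof.
  unfold dot, Cmod. destruct a as [a1 a2], b as [b1 b2]; cbn [fst snd].
  replace (a1 ^ 2 + a2 ^ 2) with (Rsqr a1 + Rsqr a2) by (unfold Rsqr; ring).
  replace (b1 ^ 2 + b2 ^ 2) with (Rsqr b1 + Rsqr b2) by (unfold Rsqr; ring).
  apply sqrt_cauchy.
Qed.

Lemma Cmod_fst (a : Cplx) : Rabs (fst a) <= Cmod a.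
Proof. pose proof (Cmod_sq a). pose proof (Cmod_ge0 a). apply Rabs_le; nra. Qed.

Lemma Cmod_snd (a : Cplx) : Rabs (snd a) <= Cmod a.
Proof. pose proof (Cmod_sq a). pose proof (Cmod_ge0 a). apply Rabs_le; nra. Qed.

Lemma Cmod_Csub_self (a : Cplx) : Cmod (Csub a a) = 0.
Proof.
  unfold Cmod, Csub; cbn [fst snd]. rewrite !Rminus_diag.
  replace (0 ^ 2 + 0 ^ 2) with 0 by ring. apply sqrt_0.
Qed.

Lemma Cmod_Csub_sym (a b : Cplx) : Cmod (Csub a b) = Cmod (Csub b a).
Proof. unfold Cmod, Csub; cbn [fst snd]; f_equal; ring. Qed.

Lemma Cmod_Csub_le0 (a b : Cplx) : Cmod (Csub a b) <= 0 -> a = b.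
Proof.
  intro H. pose proof (Cmod_sq (Csub a b)). pose proof (Cmod_ge0 (Csub a b)).
  destruct a as [a1 a2], b as [b1 b2]; unfold Csub in *; cbn [fst snd] in *.
  pose proof (pow2_ge_0 (a1 - b1)). pose proof (pow2_ge_0 (a2 - b2)).
  assert (E1 : Rsqr (a1 - b1) = 0) by (unfold Rsqr; nra).
  assert (E2 : Rsqr (a2 - b2) = 0) by (unfold Rsqr; nra).
  apply Rsqr_0_uniq in E1. apply Rsqr_0_uniq in E2.
  f_equal; lra.
Qed.

Lemma Cmod_Csub_pos (a b : Cplx) : a <> b -> 0 < Cmod (Csub a b).
Proof.
  intro H. destruct (Rle_lt_dec (Cmod (Csub a b)) 0) as [Hle|]; [|assumption].
  exfalso. exact (H (Cmod_Csub_le0 a b Hle)).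
Qed.

Lemma Csub_Cadd_l (z p : Cplx) : Csub (Cadd z p) z = p.
Proof. destruct z, p; unfold Csub, Cadd; cbn [fst snd]; f_equal; ring. Qed.

Lemma Csub_Cadd (z p q : Cplx) : Csub (Cadd z q) (Cadd z p) = Csub q p.
Proof. destruct z, p, q; unfold Csub, Cadd; cbn [fst snd]; f_equal; ring. Qed.

Lemma Cmod_polar (s t : R) : 0 <= s -> Cmod (polar s t) = s.
Proof.
  intro Hs. unfold Cmod, polar; cbn [fst snd].
  replace ((s * cos t) ^ 2 + (s * sin t) ^ 2)
    with (s * s * (Rsqr (sin t) + Rsqr (cos t))) by (unfold Rsqr; ring).
  rewrite sin2_cos2, Rmult_1_r. apply sqrt_square; lra.
Qed.

Lemma Re_Cdiv (W D : Cplx) :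
  0 < Cmod D -> Re (Cdiv W D) = dot W D / (Cmod D * Cmod D).
Proof.
  intro HD. pose proof (Cmod_sq D) as Hs.
  unfold Re, Cdiv, Cmul, Cinv, dot; cbn [fst snd]. rewrite <- Hs. field. lra.
Qed.

(* The angle condition: the increments of f make an angle at most
   arccos d with the increments of the variable. This is delta-monotonicity
   with the quotient multiplied out. *)
Definition cone_condition (f : Cplx -> Cplx) (d : R) : Prop :=
  forall z w : Cplx, z <> w ->
    dot (Csub (f z) (f w)) (Csub z w) >= d * Cmod (Csub (f z) (f w)) * Cmod (Csub z w).

Lemma delta_monotone_iff_cone (f : Cplx -> Cplx) :
  delta_monotone f <-> exists d, 0 < d /\ cone_condition f d.
Proof.
  assert (Hequiv : forall d z w, z <> w ->
    Re (Cdiv (Csub (f z) (f w)) (Csub z w))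
      >= d * (Cmod (Csub (f z) (f w)) / Cmod (Csub z w)) <->
    dot (Csub (f z) (f w)) (Csub z w)
      >= d * Cmod (Csub (f z) (f w)) * Cmod (Csub z w)).
  { intros d z w Hzw. pose proof (Cmod_Csub_pos z w Hzw) as Hs.
    rewrite Re_Cdiv by exact Hs.
    set (s := Cmod (Csub z w)) in *.
    replace (d * (Cmod (Csub (f z) (f w)) / s))
      with (d * Cmod (Csub (f z) (f w)) * s / (s * s)) by (field; lra).
    assert (Hss : 0 < s * s) by nra.
    split; intro H; apply Rle_ge; apply Rge_le in H.
    - apply (Rmult_le_compat_r (s * s)) in H; [|lra].
      unfold Rdiv in H. rewrite !Rmult_assoc, Rinv_l in H by lra. lra.
    - apply Rmult_le_compat_r; [left; apply Rinv_0_lt_compat|]; lra. }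
  split.
  - intros [d [Hd H]]. exists d. split; [exact Hd|].
    intros z w Hzw. apply Hequiv; auto.
  - intros [d [Hd H]]. exists d. split; [exact Hd|].
    intros z w Hzw. apply Hequiv; auto.
Qed.

Lemma cone_condition_weaken (f : Cplx -> Cplx) (d d' : R) :
  0 <= d' <= d -> cone_condition f d -> cone_condition f d'.
Proof.
  intros Hd' Hc z w Hzw. specialize (Hc z w Hzw).
  pose proof (Cmod_ge0 (Csub (f z) (f w))). pose proof (Cmod_ge0 (Csub z w)).
  assert (d' * Cmod (Csub (f z) (f w)) * Cmod (Csub z w)
          <= d * Cmod (Csub (f z) (f w)) * Cmod (Csub z w)).
  { apply Rmult_le_compat_r; [lra|]. apply Rmult_le_compat_r; lra. }
  lra.
Qed.

Section ChainEstimate.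

Variables (f : Cplx -> Cplx) (d : R).
Hypothesis Hd : 0 < d <= 1.
Hypothesis Hcone : cone_condition f d.

Let close (p m : Cplx) : Prop := dot p m >= (1 - d * d / 8) * Cmod p.

Lemma dot_unit_lower_bound (a p m : Cplx) :
  Cmod m = 1 -> 0 < Cmod p -> dot a p >= d * Cmod a * Cmod p -> close p m ->
  dot a m >= d / 2 * Cmod a.
Proof.
  unfold close. intros Hm Hp Hap Hpm.
  set (P := Cmod p) in *.
  set (w := (P * fst m - fst p, P * snd m - snd p)).
  assert (Hm2 : fst m ^ 2 + snd m ^ 2 = 1) by (rewrite <- Cmod_sq, Hm; ring).
  assert (Hp2 : fst p ^ 2 + snd p ^ 2 = P * P) by (unfold P; rewrite Cmod_sq; ring).
  assert (Hw : Cmod w <= d / 2 * P).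
  { apply Cmod_le_sq; [nra|]. unfold w; cbn [fst snd]. unfold dot in Hpm. nra. }
  assert (Hcs := dot_le_Cmod (- fst a, - snd a) w).
  replace (Cmod (- fst a, - snd a)) with (Cmod a) in Hcs
    by (unfold Cmod; cbn [fst snd]; f_equal; ring).
  assert (Ha0 := Cmod_ge0 a).
  assert (E : P * dot a m = dot a p - dot (- fst a, - snd a) w)
    by (unfold dot, w; cbn [fst snd]; ring).
  assert (Cmod a * Cmod w <= Cmod a * (d / 2 * P)) by (apply Rmult_le_compat_l; lra).
  apply Rle_ge. apply (Rmult_le_reg_l P); [lra|]. nra.
Qed.

(* One step of the chain: if p and q - p are both close to the unit vector m,
   then |f(z+q) - f(z)| >= d/2 |f(z+p) - f(z)|, since both increments
   f(z+p) - f(z) and f(z+q) - f(z+p) have positive component along m. *)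
Lemma chain_step (z p q m : Cplx) :
  Cmod m = 1 -> 0 < Cmod p -> 0 < Cmod (Csub q p) -> close p m -> close (Csub q p) m ->
  Cmod (Csub (f (Cadd z q)) (f z)) >= d / 2 * Cmod (Csub (f (Cadd z p)) (f z)).
Proof.
  intros Hm Hp Hqp H1 H2.
  assert (Hneq : forall a b, 0 < Cmod (Csub a b) -> a <> b)
    by (intros a b H E; subst; rewrite Cmod_Csub_self in H; lra).
  set (a := Csub (f (Cadd z p)) (f z)).
  set (b := Csub (f (Cadd z q)) (f (Cadd z p))).
  assert (Ha : dot a p >= d * Cmod a * Cmod p).
  { pose proof (Hcone (Cadd z p) z) as C. rewrite Csub_Cadd_l in C.
    apply C, Hneq. rewrite Csub_Cadd_l. exact Hp. }
  assert (Hb : dot b (Csub q p) >= d * Cmod b * Cmod (Csub q p)).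
  { pose proof (Hcone (Cadd z q) (Cadd z p)) as C. rewrite Csub_Cadd in C.
    apply C, Hneq. rewrite Csub_Cadd. exact Hqp. }
  pose proof (dot_unit_lower_bound a p m Hm Hp Ha H1) as Ha'.
  pose proof (dot_unit_lower_bound b (Csub q p) m Hm Hqp Hb H2) as Hb'.
  assert (E : Csub (f (Cadd z q)) (f z) = (fst a + fst b, snd a + snd b))
    by (unfold a, b, Csub; cbn [fst snd]; f_equal; ring).
  rewrite E. pose proof (dot_le_Cmod (fst a + fst b, snd a + snd b) m) as C.
  rewrite Hm in C. unfold dot in C, Ha', Hb'; cbn [fst snd] in C.
  pose proof (Cmod_ge0 b). fold a. nra.
Qed.

Lemma cos_small_angle (h : R) : 0 < h -> h <= d / 2 -> cos h >= 1 - d * d / 8.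
Proof.
  intros Hh Hhd.
  replace h with (2 * (h / 2)) by field. rewrite cos_2a_sin.
  assert (PI2_1 := PI2_1).
  assert (0 <= sin (h / 2) < h / 2) by (split; [apply sin_ge_0|apply sin_lt_x]; lra).
  nra.
Qed.

(* Scaling by N = 1 + 3/d while rotating by a small angle h: the increment
   from s e^{it} to s N e^{i(t+h)} is close to the new direction e^{i(t+h)}.
   This is the inequality (1-e)^2 |q - p|^2 <= <q - p, m>^2 with C = cos h. *)
Lemma scaled_rotation_close (N C : R) :
  N = 1 + 3 / d -> 1 - d * d / 8 <= C <= 1 ->
  (1 - d * d / 8) * (1 - d * d / 8) * (N * N - 2 * N * C + 1) <= (N - C) * (N - C).
Proof.
  intros HN HC. set (e := d * d / 8) in *. set (t := N - C).
  assert (Ht : t * d >= 3) by (unfold t; rewrite HN; field_simplify; nra).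
  assert (t * t * e >= 9 / 8) by (unfold e; nra).
  assert (0 < e <= 1 / 8) by (unfold e; nra).
  replace (N * N - 2 * N * C + 1) with (t * t + (1 - C * C)) by (unfold t; ring).
  assert (0 <= 1 - C * C <= 1) by nra.
  nra.
Qed.

Lemma spiral_step_close (s t h N : R) :
  0 < s -> 0 < h -> h <= d / 2 -> N = 1 + 3 / d ->
  close (polar s t) (polar 1 (t + h)) /\
  close (Csub (polar (s * N) (t + h)) (polar s t)) (polar 1 (t + h)) /\
  0 < Cmod (Csub (polar (s * N) (t + h)) (polar s t)).
Proof.
  intros Hs Hh Hhd HN.
  assert (HN4 : N >= 4).
  { rewrite HN. assert (3 / d >= 3); [|lra].
    apply Rle_ge, (Rmult_le_reg_r d); [lra|]. field_simplify; lra. }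
  set (p := polar s t). set (q := polar (s * N) (t + h)). set (m := polar 1 (t + h)).
  assert (Hm : Cmod m = 1) by (apply Cmod_polar; lra).
  assert (Hp : Cmod p = s) by (apply Cmod_polar; lra).
  assert (HC := cos_small_angle h Hh Hhd). assert (HC1 := COS_bound h).
  assert (Hcm := cos_minus (t + h) t). replace (t + h - t) with h in Hcm by ring.
  assert (S1 := sin2_cos2 t). assert (S2 := sin2_cos2 (t + h)). unfold Rsqr in S1, S2.
  assert (Hd1 : dot p m = s * cos h)
    by (unfold dot, p, m, polar; cbn [fst snd]; rewrite Hcm; ring).
  assert (Hd2 : dot (Csub q p) m = s * (N - cos h)).
  { unfold dot, Csub, p, q, m, polar; cbn [fst snd]. rewrite Hcm.
    transitivity (s * N * (sin (t + h) * sin (t + h) + cos (t + h) * cos (t + h))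
        - s * (cos (t + h) * cos t + sin (t + h) * sin t)); [ring|].
    rewrite S2. ring. }
  assert (Hqp2 : fst (Csub q p) ^ 2 + snd (Csub q p) ^ 2
                 = s * s * (N * N - 2 * N * cos h + 1)).
  { unfold Csub, p, q, polar; cbn [fst snd]. rewrite Hcm.
    transitivity (s * s * (N * N * (sin (t + h) * sin (t + h) + cos (t + h) * cos (t + h))
        - 2 * N * (cos (t + h) * cos t + sin (t + h) * sin t)
        + (sin t * sin t + cos t * cos t))); [ring|].
    rewrite S1, S2. ring. }
  split; [|split].
  - unfold close. rewrite Hd1, Hp. nra.
  - unfold close. rewrite Hd2. apply Rle_ge.
    pose proof (Cmod_sq (Csub q p)). pose proof (Cmod_ge0 (Csub q p)).
    pose proof (scaled_rotation_close N (cos h) HN ltac:(lra)).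
    assert (0 <= 1 - d * d / 8) by nra.
    assert (((1 - d * d / 8) * Cmod (Csub q p)) * ((1 - d * d / 8) * Cmod (Csub q p))
            <= (s * (N - cos h)) * (s * (N - cos h))).
    { replace (((1 - d * d / 8) * Cmod (Csub q p)) * ((1 - d * d / 8) * Cmod (Csub q p)))
        with (s * s * ((1 - d * d / 8) * (1 - d * d / 8) * (N * N - 2 * N * cos h + 1)))
        by (rewrite <- Rmult_assoc, (Rmult_comm (s * s)), Rmult_assoc, <- Hqp2, <- Cmod_sq;
            ring).
      replace (s * (N - cos h) * (s * (N - cos h))) with (s * s * ((N - cos h) * (N - cos h)))
        by ring.
      apply Rmult_le_compat_l; nra. }
    assert (0 <= s * (N - cos h)) by (apply Rmult_le_pos; lra). nra.
  - pose proof (dot_le_Cmod (Csub q p) m) as C. rewrite Hm, Hd2 in C.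
    assert (0 < s * (N - cos h)) by (apply Rmult_lt_0_compat; lra). lra.
Qed.

Lemma spiral_chain (z : Cplx) (r a h N : R) :
  0 < r -> 0 < h -> h <= d / 2 -> N = 1 + 3 / d ->
  forall k : nat,
  Cmod (Csub (f (Cadd z (polar (r * N ^ k) (a + INR k * h)))) (f z))
    >= (d / 2) ^ k * Cmod (Csub (f (Cadd z (polar r a))) (f z)).
Proof.
  intros Hr Hh Hhd HN.
  assert (HN1 : 0 < N)
    by (rewrite HN; assert (0 < 3 / d) by (apply Rdiv_lt_0_compat; lra); lra).
  induction k as [|k IHk].
  - simpl. replace (a + 0 * h) with a by ring. rewrite Rmult_1_r. lra.
  - set (t := a + INR k * h) in *. set (s := r * N ^ k) in *.
    assert (Hs : 0 < s) by (apply Rmult_lt_0_compat; [lra|apply pow_lt; lra]).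
    replace (a + INR (S k) * h) with (t + h) by (unfold t; rewrite S_INR; ring).
    replace (r * N ^ S k) with (s * N) by (unfold s; simpl; ring).
    destruct (spiral_step_close s t h N Hs Hh Hhd HN) as [Hclose1 [Hclose2 Hqp]].
    assert (Hm : Cmod (polar 1 (t + h)) = 1) by (apply Cmod_polar; lra).
    assert (Hp : 0 < Cmod (polar s t)) by (rewrite Cmod_polar; lra).
    pose proof (chain_step z _ _ _ Hm Hp Hqp Hclose1 Hclose2) as Hstep.
    change ((d / 2) ^ S k) with (d / 2 * (d / 2) ^ k).
    pose proof (Cmod_ge0 (Csub (f (Cadd z (polar r a))) (f z))).
    apply Rle_ge. eapply Rle_trans; [|apply Rge_le; exact Hstep].
    rewrite Rmult_assoc. apply Rmult_le_compat_l; [lra|]. apply Rge_le; exact IHk.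
Qed.

(* It follows
   from a spiral chain turning by the angle pi in n steps, n > 2 pi / d. *)
Lemma opposite_comparison :
  exists M k, 1 <= M /\ 0 < k /\
    forall x r, 0 < r ->
      Cmod (Csub (f (x + r * M, 0)) (f (x, 0))) >= k * Cmod (Csub (f (x - r, 0)) (f (x, 0))).
Proof.
  assert (Hpi := PI_RGT_0).
  destruct (INR_unbounded (2 * PI / d)) as [n Hn].
  set (N := 1 + 3 / d).
  assert (HN : 1 <= N) by (unfold N; assert (0 < 3 / d) by (apply Rdiv_lt_0_compat; lra); lra).
  assert (Hn0 : 0 < INR n) by (assert (0 < 2 * PI / d) by (apply Rdiv_lt_0_compat; lra); lra).
  set (h := PI / INR n).
  assert (Hh : 0 < h) by (apply Rdiv_lt_0_compat; lra).
  assert (Hhd : h <= d / 2).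
  { unfold h. apply (Rmult_le_reg_r (INR n)); [lra|].
    replace (PI / INR n * INR n) with PI by (field; lra).
    apply (Rmult_lt_compat_l d) in Hn; [|lra].
    replace (d * (2 * PI / d)) with (2 * PI) in Hn by (field; lra). lra. }
  exists (N ^ n), ((d / 2) ^ n). split; [|split].
  - apply pow_R1_Rle; lra.
  - apply pow_lt; lra.
  - intros x r Hr.
    pose proof (spiral_chain (x, 0) r PI h N Hr Hh Hhd eq_refl n) as C.
    replace (PI + INR n * h) with (2 * PI) in C by (unfold h; field; lra).
    unfold polar, Cadd in C. rewrite cos_2PI, sin_2PI, cos_PI, sin_PI in C.
    cbn [fst snd] in C.
    replace (x + r * N ^ n * 1) with (x + r * N ^ n) in C by ring.
    replace (x + r * -1) with (x - r) in C by ring.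
    rewrite !Rmult_0_r, !Rplus_0_r in C. exact C.
Qed.

End ChainEstimate.

Definition re_trace (f : Cplx -> Cplx) (x : R) : R := fst (f (x, 0)).

Section RealTrace.

Variables (f : Cplx -> Cplx) (d : R).
Hypothesis Hd : 0 < d <= 1.
Hypothesis Hcone : cone_condition f d.

Local Notation u := (re_trace f).

Lemma re_trace_increment (x y : R) :
  x < y -> u y - u x >= d * Cmod (Csub (f (y, 0)) (f (x, 0))).
Proof.
  intros Hxy.
  assert (Hne : (y, 0) <> (x, 0)) by (intro E; inversion E; lra).
  pose proof (Hcone _ _ Hne) as C.
  assert (E : Cmod (Csub (y, 0) (x, 0)) = y - x).
  { unfold Cmod, Csub; cbn [fst snd].
    replace ((y - x) ^ 2 + (0 - 0) ^ 2) with ((y - x) * (y - x)) by ring.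
    apply sqrt_square; lra. }
  assert (Edot : dot (Csub (f (y, 0)) (f (x, 0))) (Csub (y, 0) (x, 0)) = (u y - u x) * (y - x))
    by (unfold dot, Csub, re_trace; cbn [fst snd]; ring).
  rewrite E, Edot in C.
  apply Rle_ge. apply Rge_le in C. apply (Rmult_le_reg_r (y - x)); lra.
Qed.

Lemma re_trace_mono (x y : R) : x <= y -> u x <= u y.
Proof.
  intros [H|H]; [|subst; lra].
  pose proof (re_trace_increment x y H). pose proof (Cmod_ge0 (Csub (f (y, 0)) (f (x, 0)))). nra.
Qed.

Lemma re_trace_le_Cmod (x y : R) : Rabs (u x - u y) <= Cmod (Csub (f (x, 0)) (f (y, 0))).
Proof. exact (Cmod_fst (Csub (f (x, 0)) (f (y, 0)))). Qed.

Lemma re_trace_controls (x y : R) :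
  d * Cmod (Csub (f (x, 0)) (f (y, 0))) <= Rabs (u x - u y).
Proof.
  destruct (Rtotal_order x y) as [H|[H|H]].
  - pose proof (re_trace_increment x y H). rewrite Cmod_Csub_sym, Rabs_minus_sym.
    pose proof (Rle_abs (u y - u x)). lra.
  - subst. rewrite Cmod_Csub_self, Rmult_0_r. apply Rabs_pos.
  - pose proof (re_trace_increment y x H). pose proof (Rle_abs (u x - u y)). lra.
Qed.

Lemma re_trace_determines (x y : R) : u x = u y -> f (x, 0) = f (y, 0).
Proof.
  intro E. pose proof (re_trace_controls x y) as Hctl. rewrite E, Rminus_diag, Rabs_R0 in Hctl.
  apply Cmod_Csub_le0. pose proof (Cmod_ge0 (Csub (f (x, 0)) (f (y, 0)))). nra.
Qed.

(* A map constant on the real axis is constant: comparing z = (a, b) with the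
   two far points a +- T of the axis forces 2 b Im(f z - c) >= 2 d T |f z - c|,
   impossible for T > |b| / d unless f z = c. *)
Lemma constant_on_real_axis (c : Cplx) : (forall x, f (x, 0) = c) -> forall z, f z = c.
Proof.
  intros Hc [a b].
  set (T := Rabs b / d + 1).
  assert (HT : Rabs b < d * T) by (unfold T; field_simplify; lra).
  assert (HTpos : 0 < T).
  { unfold T. assert (0 <= Rabs b / d) by (unfold Rdiv; apply Rmult_le_pos; [apply Rabs_pos|left; apply Rinv_0_lt_compat; lra]). lra. }
  set (v := Csub (f (a, b)) c).
  assert (Hside : forall e, Rabs e = T ->
            dot v (- e, b) >= d * Cmod v * T).
  { intros e He.
    assert (Hne : (a, b) <> (a + e, 0)).
    { intro E. assert (e = 0) by (inversion E; lra). subst. rewrite Rabs_R0 in He. lra. }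
    pose proof (Hcone _ _ Hne) as C. rewrite Hc in C. fold v in C.
    replace (Csub (a, b) (a + e, 0)) with (- e, b) in C
      by (unfold Csub; cbn [fst snd]; f_equal; ring).
    pose proof (Cmod_fst (- e, b)) as F; cbn [fst] in F. rewrite Rabs_Ropp, He in F.
    pose proof (Cmod_ge0 v).
    assert (d * Cmod v * T <= d * Cmod v * Cmod (- e, b))
      by (apply Rmult_le_compat_l; [nra|lra]).
    lra. }
  pose proof (Hside T (Rabs_pos_eq T ltac:(lra))) as C1.
  pose proof (Hside (- T) ltac:(rewrite Rabs_Ropp; apply Rabs_pos_eq; lra)) as C2.
  unfold dot in C1, C2; cbn [fst snd] in C1, C2.
  pose proof (Cmod_snd v) as Hv. pose proof (Cmod_ge0 v).
  assert (snd v * b <= Cmod v * Rabs b).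
  { pose proof (Rle_abs (snd v * b)) as Hvb. rewrite Rabs_mult in Hvb.
    pose proof (Rabs_pos b). pose proof (Rabs_pos (snd v)). nra. }
  apply Cmod_Csub_le0. fold v. nra.
Qed.

Lemma re_trace_comparison :
  exists M c, 1 <= M /\ 0 < c /\
    forall x r, 0 < r -> u (x + r * M) - u x >= c * (u x - u (x - r)).
Proof.
  destruct (opposite_comparison f d Hd Hcone) as [M [k [HM [Hk Hcmp]]]].
  exists M, (d * k). split; [exact HM|split; [nra|]].
  intros x r Hr.
  pose proof (Hcmp x r Hr) as Hfar.
  pose proof (re_trace_increment x (x + r * M) ltac:(nra)) as Hinc.
  pose proof (re_trace_le_Cmod (x - r) x) as Hnear. rewrite Rabs_minus_sym in Hnear.
  pose proof (Rle_abs (u x - u (x - r))).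
  assert (k * Cmod (Csub (f (x - r, 0)) (f (x, 0))) >= k * (u x - u (x - r)))
    by (apply Rle_ge, Rmult_le_compat_l; lra).
  assert (d * Cmod (Csub (f (x + r * M, 0)) (f (x, 0))) >= d * (k * (u x - u (x - r))))
    by (apply Rle_ge, Rmult_le_compat_l; lra).
  lra.
Qed.

(* Nonconstancy of f forces the real part to increase somewhere on (0, oo):
   otherwise u, hence f, is constant on [0, oo), hence on the whole axis by
   the comparison, hence everywhere. *)
Lemma re_trace_increases : nonconstant f -> exists t, 0 < t /\ u 0 < u t.
Proof.
  intros [z [w Hzw]]. apply NNPP; intro Hn.
  destruct re_trace_comparison as [M [c [HM [Hc Hcmp]]]].
  assert (Hpos : forall t, 0 <= t -> u t = u 0).
  { intros t Ht. pose proof (re_trace_mono 0 t Ht).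
    destruct (Rle_lt_dec (u t) (u 0)) as [|Hlt]; [lra|].
    destruct Ht as [Ht|<-]; [|lra]. exfalso; apply Hn; exists t; auto. }
  assert (Hall : forall x, f (x, 0) = f (0, 0)).
  { intro x. apply re_trace_determines.
    destruct (Rle_lt_dec 0 x) as [Hx|Hx]; [auto|].
    pose proof (Hcmp 0 (- x) ltac:(lra)) as C.
    rewrite Hpos in C by nra. replace (0 - - x) with x in C by ring.
    pose proof (re_trace_mono x 0 ltac:(lra)).
    assert (c * (u 0 - u x) <= 0) by lra.
    assert (u 0 - u x <= 0); [|lra].
    apply (Rmult_le_reg_l c); lra. }
  apply Hzw. rewrite (constant_on_real_axis _ Hall z), (constant_on_real_axis _ Hall w).
  reflexivity.
Qed.

(* Once u t - u 0 = D > 0, the step t |-> t + t M adds at least c D,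
   so the real part is unbounded above. *)
Lemma re_trace_unbounded_above : nonconstant f -> forall K, exists x, K <= u x.
Proof.
  intros Hnc K.
  destruct re_trace_comparison as [M [c [HM [Hc Hcmp]]]].
  destruct (re_trace_increases Hnc) as [t1 [Ht1 Hu1]].
  set (D := u t1 - u 0).
  assert (Hiter : forall m : nat, exists t, 0 < t /\ u t - u 0 >= D + INR m * c * D).
  { induction m as [|m [t [Ht Hu]]].
    - exists t1. simpl. unfold D. lra.
    - exists (t + t * M). split; [nra|].
      pose proof (Hcmp t t Ht) as Hgrow. rewrite Rminus_diag in Hgrow. rewrite S_INR.
      assert (0 <= INR m * c * D)
        by (apply Rmult_le_pos; [apply Rmult_le_pos; [apply pos_INR|lra]|unfold D; lra]).
      assert (c * (u t - u 0) >= c * D) by (apply Rle_ge, Rmult_le_compat_l; lra).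
      lra. }
  assert (HcD : 0 < c * D) by (unfold D; nra).
  destruct (INR_unbounded ((K - u 0) / (c * D))) as [m Hm].
  destruct (Hiter m) as [t [Ht Hu]]. exists t.
  apply (Rmult_gt_compat_r (c * D)) in Hm; [|lra].
  replace ((K - u 0) / (c * D) * (c * D)) with (K - u 0) in Hm by (field; unfold D; lra).
  unfold D in *. nra.
Qed.

(* The real part has no jumps: a jump J at x0 would, by the comparison,
   produce increments >= c J on each of the infinitely many disjoint
   intervals (x0 + e/rho, x0 + e), rho = 1 + 2 M, e = rho^-m, inside
   [x0, x0 + 1]. *)
Lemma re_trace_no_jump (x0 J : R) : 0 < J -> exists e, 0 < e /\ u (x0 + e) - u (x0 - e) < J.
Proof.
  intros HJ.
  destruct re_trace_comparison as [M [c [HM [Hc Hcmp]]]].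
  apply NNPP; intro Hn.
  assert (Hkey : forall e, 0 < e -> u (x0 + e + 2 * e * M) - u (x0 + e) >= c * J).
  { intros e He.
    assert (Hjump : u (x0 + e) - u (x0 - e) >= J)
      by (apply Rnot_lt_ge; intro H; apply Hn; exists e; auto).
    pose proof (Hcmp (x0 + e) (2 * e) ltac:(lra)) as C.
    replace (x0 + e - 2 * e) with (x0 - e) in C by ring.
    assert (c * (u (x0 + e) - u (x0 - e)) >= c * J)
      by (apply Rle_ge, Rmult_le_compat_l; lra).
    lra. }
  set (rho := 1 + 2 * M).
  assert (Hiter : forall m : nat, exists e, 0 < e <= 1 /\ u (x0 + 1) - u (x0 + e) >= INR m * (c * J)).
  { induction m as [|m [e [He Hu]]].
    - exists 1. simpl. lra.
    - exists (e / rho).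
      assert (Hr : 1 <= rho) by (unfold rho; lra).
      assert (He' : 0 < e / rho) by (apply Rdiv_lt_0_compat; lra).
      split; [split; [exact He'|]|].
      + apply (Rmult_le_reg_r rho); [lra|].
        replace (e / rho * rho) with e by (field; lra). nra.
      + pose proof (Hkey (e / rho) He') as K.
        replace (x0 + e / rho + 2 * (e / rho) * M) with (x0 + e) in K by (unfold rho; field; lra).
        rewrite S_INR. lra. }
  assert (HcJ : 0 < c * J) by nra.
  destruct (INR_unbounded ((u (x0 + 1) - u x0) / (c * J))) as [m Hm].
  destruct (Hiter m) as [e [He Hu]].
  pose proof (re_trace_mono x0 (x0 + e) ltac:(lra)).
  apply (Rmult_gt_compat_r (c * J)) in Hm; [|lra].
  replace ((u (x0 + 1) - u x0) / (c * J) * (c * J)) with (u (x0 + 1) - u x0) in Hm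
    by (field; lra).
  lra.
Qed.

(* A monotone function without jumps is continuous. *)
Lemma re_trace_continuous : continuity u.
Proof.
  intros x0 eps Heps.
  destruct (re_trace_no_jump x0 eps Heps) as [e [He Hu]].
  exists e. split; [lra|]. intros y [_ Hy]. simpl in *. unfold R_dist in *.
  apply Rabs_def2 in Hy.
  pose proof (re_trace_mono (x0 - e) y ltac:(lra)). pose proof (re_trace_mono y (x0 + e) ltac:(lra)).
  pose proof (re_trace_mono (x0 - e) x0 ltac:(lra)). pose proof (re_trace_mono x0 (x0 + e) ltac:(lra)).
  apply Rabs_def1; lra.
Qed.

End RealTrace.

(* Point reflection of a map, z |-> -f(-z); it preserves the angle condition
   and reverses the real axis, so "unbounded below" follows from "above". *)
Definition reflect (f : Cplx -> Cplx) (z : Cplx) : Cplx :=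
  (- fst (f (- fst z, - snd z)), - snd (f (- fst z, - snd z))).

Lemma cone_condition_reflect (f : Cplx -> Cplx) (d : R) :
  cone_condition f d -> cone_condition (reflect f) d.
Proof.
  intros Hc [a b] [a' b'] Hne.
  assert (Hne' : (- a, - b) <> (- a', - b'))
    by (intro E; apply Hne; inversion E; f_equal; lra).
  pose proof (Hc _ _ Hne') as C. unfold reflect; cbn [fst snd].
  destruct (f (- a, - b)) as [p1 p2], (f (- a', - b')) as [q1 q2].
  unfold dot, Cmod, Csub in *; cbn [fst snd] in *.
  replace ((- p1 - - q1) ^ 2 + (- p2 - - q2) ^ 2) with ((p1 - q1) ^ 2 + (p2 - q2) ^ 2) by ring.
  replace ((a - a') ^ 2 + (b - b') ^ 2) with ((- a - - a') ^ 2 + (- b - - b') ^ 2) by ring.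
  lra.
Qed.

Lemma nonconstant_reflect (f : Cplx -> Cplx) : nonconstant f -> nonconstant (reflect f).
Proof.
  intros [[a b] [[a' b'] Hne]]. exists (- a, - b), (- a', - b').
  unfold reflect; cbn [fst snd]. rewrite !Ropp_involutive.
  destruct (f (a, b)) as [p1 p2], (f (a', b')) as [q1 q2].
  intro E. apply Hne. inversion E. f_equal; lra.
Qed.

Lemma re_trace_reflect (f : Cplx -> Cplx) (x : R) : re_trace (reflect f) x = - re_trace f (- x).
Proof. unfold re_trace, reflect; cbn [fst snd]. rewrite Ropp_0. reflexivity. Qed.

Lemma re_trace_surjective (f : Cplx -> Cplx) (d : R) :
  0 < d <= 1 -> cone_condition f d -> nonconstant f -> forall s, exists x, re_trace f x = s.
Proof.
  intros Hd Hc Hnc s.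
  destruct (re_trace_unbounded_above f d Hd Hc Hnc s) as [x1 H1].
  destruct (re_trace_unbounded_above (reflect f) d Hd (cone_condition_reflect f d Hc)
              (nonconstant_reflect f Hnc) (- s)) as [y H2].
  rewrite re_trace_reflect in H2.
  destruct (Rle_lt_dec (- y) x1) as [Hle|Hlt].
  - destruct (IVT_cor (fun x => re_trace f x - s) (- y) x1) as [x [_ Hx]]; [| |nra|].
    + apply continuity_minus; [exact (re_trace_continuous f d Hd Hc)|apply continuity_const].
      intros a b; reflexivity.
    + exact Hle.
    + exists x. lra.
  - exists x1. pose proof (re_trace_mono f d Hd Hc x1 (- y) ltac:(lra)). lra.
Qed.

Lemma real_axis_image_is_lipschitz_graph (f : Cplx -> Cplx) (d : R) :
  0 < d <= 1 -> cone_condition f d -> nonconstant f ->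
  exists g : R -> R, lipschitz g /\
    forall w : Cplx, (exists x : R, w = f (RtoC x)) <-> exists s : R, w = (s, g s).
Proof.
  intros Hd Hc Hnc.
  pose proof (re_trace_surjective f d Hd Hc Hnc) as Hs.
  set (xs := fun s => proj1_sig (constructive_indefinite_description _ (Hs s))).
  assert (Hxs : forall s, re_trace f (xs s) = s)
    by (intro s; unfold xs; destruct constructive_indefinite_description; auto).
  assert (Hpt : forall x, f (x, 0) = (re_trace f x, snd (f (x, 0))))
    by (intro x; apply surjective_pairing).
  exists (fun s => snd (f (xs s, 0))). split.
  - exists (1 / d). intros s t.
    assert (Hsnd : Rabs (snd (f (xs s, 0)) - snd (f (xs t, 0)))
                   <= Cmod (Csub (f (xs s, 0)) (f (xs t, 0))))
      by exact (Cmod_snd (Csub (f (xs s, 0)) (f (xs t, 0)))).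
    pose proof (re_trace_controls f d Hc (xs s) (xs t)) as Hctl.
    rewrite !Hxs in Hctl.
    apply (Rmult_le_reg_l d); [lra|].
    replace (d * (1 / d * Rabs (s - t))) with (Rabs (s - t)) by (field; lra).
    assert (d * Rabs (snd (f (xs s, 0)) - snd (f (xs t, 0)))
            <= d * Cmod (Csub (f (xs s, 0)) (f (xs t, 0)))) by (apply Rmult_le_compat_l; lra).
    lra.
  - intro w. unfold RtoC. split.
    + intros [x ->]. exists (re_trace f x).
      rewrite (re_trace_determines f d Hd Hc (xs (re_trace f x)) x (Hxs _)).
      apply Hpt.
    + intros [s ->]. exists (xs s). rewrite Hpt, Hxs. reflexivity.
Qed.

Definition graph_map (g : R -> R) (K : R) (z : Cplx) : Cplx :=
  (fst z, g (fst z) + K * snd z).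

(* Pointwise estimates for the shear, with a = dx, b = dy and an increment
   G = dg with |G| <= L |a|, K = L^2 + 1: the inner product
   a^2 + G b + K b^2 is at least (a^2 + b^2) / 2 ... *)
Lemma shear_dot_lower (a b G L : R) :
  0 <= L -> Rabs G <= L * Rabs a ->
  a * a + G * b + (L * L + 1) * (b * b) >= (a * a + b * b) / 2.
Proof.
  intros HL0 HG.
  pose proof (Rabs_pos a). pose proof (Rabs_pos b). pose proof (Rabs_pos G).
  assert (Rabs a * Rabs a = a * a /\ Rabs b * Rabs b = b * b)
    by (rewrite <- !Rabs_mult; split; apply Rabs_pos_eq; nra).
  assert (Rabs G * Rabs b <= L * Rabs a * Rabs b) by (apply Rmult_le_compat_r; lra).
  pose proof (Rle_abs (- (G * b))) as HGb. rewrite Rabs_Ropp, Rabs_mult in HGb.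
  assert (0 <= (Rabs a - L * Rabs b) * (Rabs a - L * Rabs b)) by apply Rle_0_sqr.
  nra.
Qed.

(* ... while the squared image increment is at most C (a^2 + b^2). *)
Lemma shear_norm_upper (a b G L : R) :
  0 <= L -> Rabs G <= L * Rabs a ->
  a ^ 2 + (G + (L * L + 1) * b) ^ 2
    <= (1 + 2 * L * L + 2 * (L * L + 1) * (L * L + 1)) * (a ^ 2 + b ^ 2).
Proof.
  intros HL0 HG.
  pose proof (Rabs_pos a). pose proof (Rabs_pos G).
  assert (Rabs a * Rabs a = a * a /\ Rabs G * Rabs G = G * G)
    by (rewrite <- !Rabs_mult; split; apply Rabs_pos_eq; nra).
  assert (G * G <= L * L * (a * a)) by nra.
  assert (0 <= (G - (L * L + 1) * b) * (G - (L * L + 1) * b)) by apply Rle_0_sqr.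
  nra.
Qed.

(* Hence |F z - F w| <= C |z - w| (as C >= 1) and
   <F z - F w, z - w> >= |z - w|^2 / 2 >= (1 / 2C) |F z - F w| |z - w|. *)
Lemma graph_map_cone (g : R -> R) (L : R) :
  0 <= L -> (forall x y, Rabs (g x - g y) <= L * Rabs (x - y)) ->
  cone_condition (graph_map g (L * L + 1))
    (1 / (2 * (1 + 2 * L * L + 2 * (L * L + 1) * (L * L + 1)))).
Proof.
  intros HL0 HL z w Hzw.
  set (C := 1 + 2 * L * L + 2 * (L * L + 1) * (L * L + 1)).
  assert (HC : 1 <= C) by (unfold C; nra).
  pose proof (Cmod_Csub_pos z w Hzw) as Hsp. pose proof (Cmod_sq (Csub z w)) as Hs.
  set (s := Cmod (Csub z w)) in *.
  unfold graph_map, Csub in *; cbn [fst snd] in *.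
  set (a := fst z - fst w) in *. set (b := snd z - snd w) in *.
  set (G := g (fst z) - g (fst w)).
  assert (HG : Rabs G <= L * Rabs a) by apply HL.
  replace (g (fst z) + (L * L + 1) * snd z - (g (fst w) + (L * L + 1) * snd w))
    with (G + (L * L + 1) * b) by (unfold G, b; ring).
  assert (Hdot : dot (a, G + (L * L + 1) * b) (a, b) >= s * s / 2).
  { unfold dot; cbn [fst snd]. rewrite Hs.
    pose proof (shear_dot_lower a b G L HL0 HG). simpl. lra. }
  assert (Hmod : Cmod (a, G + (L * L + 1) * b) <= C * s).
  { apply Cmod_le_sq; [nra|]. cbn [fst snd].
    pose proof (shear_norm_upper a b G L HL0 HG) as Hup. fold C in Hup.
    assert (C * (a ^ 2 + b ^ 2) <= C * C * (a ^ 2 + b ^ 2)) by nra.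
    nra. }
  fold C.
  assert (1 / (2 * C) * Cmod (a, G + (L * L + 1) * b) * s <= s * s / 2).
  { apply (Rmult_le_reg_l (2 * C)); [lra|].
    replace (2 * C * (1 / (2 * C) * Cmod (a, G + (L * L + 1) * b) * s))
      with (Cmod (a, G + (L * L + 1) * b) * s) by (field; lra).
    nra. }
  lra.
Qed.

Lemma graph_map_real_axis (g : R -> R) (K x : R) : graph_map g K (RtoC x) = (x, g x).
Proof. unfold graph_map, RtoC; cbn [fst snd]. f_equal; ring. Qed.

Theorem proposition1p5 (Gamma : Cplx -> Prop) :
  (exists f : Cplx -> Cplx, nonconstant f /\ delta_monotone f /\
     (forall w : Cplx, Gamma w <-> exists x : R, w = f (RtoC x)))
  <->
  (exists g : R -> R, lipschitz g /\
     (forall w : Cplx, Gamma w <-> exists x : R, w = (x, g x))).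
Proof.
  split.
  - intros [f [Hnc [Hdm HGamma]]].
    apply delta_monotone_iff_cone in Hdm as [d [Hd Hc]].
    assert (Hd1 : 0 < Rmin d 1 <= 1) by (split; [apply Rmin_glb_lt; lra|apply Rmin_r]).
    assert (Hc1 : cone_condition f (Rmin d 1))
      by (apply (cone_condition_weaken f d); [pose proof (Rmin_l d 1); lra|exact Hc]).
    destruct (real_axis_image_is_lipschitz_graph f (Rmin d 1) Hd1 Hc1 Hnc) as [g [Hg Hgraph]].
    exists g. split; [exact Hg|]. intro w. rewrite HGamma. apply Hgraph.
  - intros [g [[L HL] HGamma]].
    assert (HL' : forall x y, Rabs (g x - g y) <= Rabs L * Rabs (x - y)).
    { intros x y. eapply Rle_trans; [apply HL|].
      apply Rmult_le_compat_r; [apply Rabs_pos|apply RRle_abs]. }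
    exists (graph_map g (Rabs L * Rabs L + 1)). split; [|split].
    + exists (0, 0), (1, 0). intro E. apply (f_equal fst) in E. cbn in E. lra.
    + apply delta_monotone_iff_cone. eexists. split;
        [|exact (graph_map_cone g (Rabs L) (Rabs_pos L) HL')].
      pose proof (Rabs_pos L). apply Rdiv_lt_0_compat; nra.
    + intro w. rewrite HGamma.
      split; intros [x ->]; exists x; rewrite graph_map_real_axis; reflexivity.
Qed.
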